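(* If a complete theory $T$ is convexly orderable, then $T$ is dp-small.
   Context: Let $T$ be a complete theory in a language $L$ with monster model $\mathcal{U}$; $\mathcal{U}_y$ denotes the $|y|$-tuples from $\mathcal{U}$, and $x$ denotes a single variable. An $L$-structure $M$ is convexly orderable if there is a linear order $\lhd$ on $M$ (not necessarily definable) such that for every $L$-formula $\varphi(x;y)$ there is $K_\varphi<\omega$ with $\varphi(M;b)$ a union of at most $K_\varphi$ $\lhd$-convex subsets of $M$ for every $b\in M_y$; $T$ is convexly orderable if some (equivalently every) model of $T$ is. A partial type $\pi(x)$ is dp-small if there do not exist $L(\mathcal{U})$-formulas $\varphi_i(x)$ ($i<\omega$), an $L$-formula $\psi(x;y)$ and $b_j\in\mathcal{U}_y$ ($j<\omega$) such that for all $i_0,j_0<\omega$ the type $\pi(x)\cup\{\varphi_{i_0}(x),\psi(x;b_{j_0})\}\cup\{\neg\varphi_i(x): i\ne i_0\}\cup\{\neg\psi(x;b_j): j\neq j_0\}$ is consistent. $T$ is dp-small if $x=x$ is dp-small. *)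

From mathcomp Require Import all_boot.
Unset Printing Implicit Defensive.

Record language := Language {
  func : Type; rel : Type;
  farity : func -> nat; rarity : rel -> nat }.
Arguments farity {_}. Arguments rarity {_}.

Inductive term (L : language) : Type :=
| tvar : nat -> term L
| tfun : forall f : func L, ('I_(farity f) -> term L) -> term L.

Inductive formula (L : language) : Type :=
| fbot : formula L
| feq : term L -> term L -> formula L
| frel : forall r : rel L, ('I_(rarity r) -> term L) -> formula L
| fneg : formula L -> formula L
| fand : formula L -> formula L -> formula L
| fex : nat -> formula L -> formula L.

Arguments tvar {L}. Arguments fbot {L}. Arguments tfun {L}. Arguments feq {L}.
Arguments frel {L}. Arguments fneg {L}. Arguments fand {L}. Arguments fex {L}.

Record structure (L : language) := Structure {
  dom :> Type;
  dom_inhabitant : dom;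
  finterp : forall f : func L, ('I_(farity f) -> dom) -> dom;
  rinterp : forall r : rel L, ('I_(rarity r) -> dom) -> Prop }.

Definition upd {A : Type} (s : nat -> A) (n : nat) (a : A) : nat -> A :=
  fun m => if m == n then a else s m.

Fixpoint eval (L : language) (M : structure L) (s : nat -> M) (t : term L) : M :=
  match t with
  | tvar n => s n
  | tfun f args => finterp L M f (fun i => eval L M s (args i))
  end.

Arguments eval {L}.
Fixpoint sat (L : language) (M : structure L) (s : nat -> M) (phi : formula L) : Prop :=
  match phi with
  | fbot => False
  | feq t u => eval M s t = eval M s u
  | frel r args => rinterp L M r (fun i => eval M s (args i))
  | fneg p => ~ sat L M s p
  | fand p q => sat L M s p /\ sat L M s q
  | fex n p => exists a : M, sat L M (upd s n a) p
  end.

Arguments sat {L}.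
Fixpoint occurs (L : language) (n : nat) (t : term L) : Prop :=
  match t with
  | tvar m => m = n
  | tfun f args => exists i, occurs L n (args i)
  end.

Arguments occurs {L}.
Fixpoint free_in (L : language) (n : nat) (phi : formula L) : Prop :=
  match phi with
  | fbot => False
  | feq t u => occurs n t \/ occurs n u
  | frel r args => exists i, occurs n (args i)
  | fneg p => free_in L n p
  | fand p q => free_in L n p \/ free_in L n q
  | fex m p => m <> n /\ free_in L n p
  end.

Arguments free_in {L}.
Definition sentence (L : language) (phi : formula L) : Prop :=
  forall n, ~ free_in n phi.

Arguments sentence {L}.
Definition theory (L : language) := formula L -> Prop.

Definition is_model (L : language) (T : theory L) (M : structure L) : Prop :=
  forall phi, T phi -> forall s : nat -> M, sat M s phi.

Arguments is_model {L}.
Definition complete_theory (L : language) (T : theory L) : Prop :=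
  (forall phi, T phi -> sentence phi) /\
  (exists M : structure L, is_model T M) /\
  (forall phi, sentence phi ->
     (forall M : structure L, is_model T M -> forall s : nat -> M, sat M s phi) \/
     (forall M : structure L, is_model T M -> forall s : nat -> M, sat M s (fneg phi))).

Arguments complete_theory {L}.
Definition elementary (L : language) (M N : structure L) (e : M -> N) : Prop :=
  forall (phi : formula L) (s : nat -> M), sat M s phi <-> sat N (fun n => e (s n)) phi.

Arguments elementary {L}.
(** * Convex orderability.  The distinguished single variable x is variable 0;
    a formula phi(x;y) is any formula, the parameters b being the values of an
    assignment on the other variables. *)
Definition linear_order {A : Type} (le : A -> A -> Prop) : Prop :=
  (forall a, le a a) /\ (forall a b, le a b -> le b a -> a = b) /\
  (forall a b c, le a b -> le b c -> le a c) /\ (forall a b, le a b \/ le b a).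

Definition convex {A : Type} (le : A -> A -> Prop) (C : A -> Prop) : Prop :=
  forall a b c, C a -> C c -> le a b -> le b c -> C b.

Definition defset (L : language) (M : structure L) (phi : formula L) (s : nat -> M) :
  M -> Prop := fun a => sat M (upd s 0 a) phi.

Arguments defset {L}.
Definition convexly_orderable_structure (L : language) (M : structure L) : Prop :=
  exists le : M -> M -> Prop, linear_order le /\
    forall phi : formula L, exists K : nat, forall s : nat -> M,
      exists C : 'I_K -> M -> Prop, (forall k, convex le (C k)) /\
        (forall a, defset M phi s a <-> exists k, C k a).

Arguments convexly_orderable_structure {L}.
Definition convexly_orderable (L : language) (T : theory L) : Prop :=
  exists M : structure L, is_model T M /\ convexly_orderable_structure M.

Arguments convexly_orderable {L}.
(** A formula with parameters from M is a pair (phi, c) of a formula and an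
    assignment c giving the parameter values of the variables other than 0.
    A set of such formulas in x is consistent (with the elementary diagram of M)
    iff it is realized in some elementary extension of M. *)
Definition consistent_over (L : language) (M : structure L)
  (Sigma : formula L -> (nat -> M) -> Prop) : Prop :=
  exists (N : structure L) (e : M -> N), elementary M N e /\
    exists a : N, forall phi c, Sigma phi c -> sat N (upd (fun n => e (c n)) 0 a) phi.

Arguments consistent_over {L}.
Definition ict_type (L : language) (M : structure L)
  (phi : nat -> formula L) (c : nat -> nat -> M) (psi : formula L) (b : nat -> nat -> M)
  (i0 j0 : nat) : formula L -> (nat -> M) -> Prop :=
  fun chi d =>
    (chi = feq (tvar 0) (tvar 0) /\ d = c i0) \/
    (chi = phi i0 /\ d = c i0) \/
    (chi = psi /\ d = b j0) \/
    (exists i, i <> i0 /\ chi = fneg (phi i) /\ d = c i) \/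
    (exists j, j <> j0 /\ chi = fneg psi /\ d = b j).

Arguments ict_type {L}.
(** T is dp-small: in no model of T (in particular not in the monster model,
    and any model embeds elementarily into it) is there such a configuration. *)
Definition dp_small (L : language) (T : theory L) : Prop :=
  forall M : structure L, is_model T M ->
    ~ exists (phi : nat -> formula L) (c : nat -> nat -> M)
             (psi : formula L) (b : nat -> nat -> M),
        forall i0 j0 : nat, consistent_over M (ict_type M phi c psi b i0 j0).
Arguments dp_small {L}.

(* If phi_i(x; a_i) and psi(x; b_j) witnessed a failure of dp-smallness, then a
   finite n x m array of it, with n larger than the number K of convex pieces of
   the instances of psi, is a first-order fact true in every model of T, in
   particular in a convexly ordered one.  There, in each column j two of the n
   points x(i, j), x(i', j) lie in one convex piece of psi(x; b_j); since m is
   large, two columns s, t share the rows i, i' and also the pieces of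
   phi_i and phi_i' containing these points.  Then {x(i,s), x(i',s)} and
   {x(i,t), x(i',t)} must occupy disjoint intervals (psi(x; b_s) excludes the
   t-points and vice versa), and so must {x(i,s), x(i,t)} and {x(i',s), x(i',t)},
   which is impossible for four points of a linear order. *)

From mathcomp Require Import all_boot.
From Stdlib Require Import FunctionalExtensionality ClassicalEpsilon.

Section Syntax.
Context {L : language}.

Fixpoint rent (r : nat -> nat) (t : term L) : term L :=
  match t with
  | tvar v => tvar (r v)
  | tfun f a => tfun f (fun k => rent r (a k))
  end.

Fixpoint renf (r : nat -> nat) (p : formula L) : formula L :=
  match p with
  | fbot => fbot
  | feq t u => feq (rent r t) (rent r u)
  | frel R a => frel R (fun k => rent r (a k))
  | fneg p => fneg (renf r p)
  | fand p q => fand (renf r p) (renf r q)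
  | fex n p => fex (r n) (renf r p)
  end.

Lemma eval_rent (M : structure L) (s : nat -> M) r t :
  eval M s (rent r t) = eval M (fun v => s (r v)) t.
Proof.
elim: t => [v|f a IH] //=.
by congr (finterp L M f _); apply: functional_extensionality => k; apply: IH.
Qed.

Lemma sat_renf (M : structure L) r p : injective r -> forall s : nat -> M,
  sat M s (renf r p) <-> sat M (fun v => s (r v)) p.
Proof.
move=> r_inj; elim: p => [|t u|R a|p IH|p IHp q IHq|n p IH] s /=.
- by [].
- by rewrite !eval_rent.
- suff -> : (fun k => eval M s (rent r (a k)))
            = (fun k => eval M (fun v => s (r v)) (a k)) by [].
  by apply: functional_extensionality => k; rewrite eval_rent.
- by rewrite IH.
- by rewrite IHp IHq.
- have upd_r a : (fun v => upd s (r n) a (r v)) = upd (fun v => s (r v)) n a.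
    by apply: functional_extensionality => v; rewrite /upd (inj_eq r_inj).
  by split=> -[a Ha]; exists a; [rewrite -upd_r -IH | rewrite IH upd_r].
Qed.

Lemma eval_ext {M : structure L} (s s' : nat -> M) t :
  (forall v, occurs v t -> s v = s' v) -> eval M s t = eval M s' t.
Proof.
elim: t => [v|f a IH] /= ss'; first exact: ss'.
congr (finterp L M f _); apply: functional_extensionality => k.
by apply: IH => v vk; apply: ss'; exists k.
Qed.

Lemma sat_ext (M : structure L) p : forall s s' : nat -> M,
  (forall v, free_in v p -> s v = s' v) -> sat M s p <-> sat M s' p.
Proof.
elim: p => [|t u|R a|p IH|p IHp q IHq|n p IH] s s' /= ss'.
- by [].
- by rewrite (eval_ext s s' t) ?(eval_ext s s' u) // => v vf; apply: ss'; [right|left].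
- suff -> : (fun k => eval M s (a k)) = (fun k => eval M s' (a k)) by [].
  apply: functional_extensionality => k.
  by apply: eval_ext => v vk; apply: ss'; exists k.
- by rewrite (IH s s').
- by rewrite (IHp s s') ?(IHq s s') // => v vf; apply: ss'; [right|left].
- have upd_ext a : forall v, free_in v p -> upd s n a v = upd s' n a v.
    move=> v vf; rewrite /upd; case: eqP => // /eqP nv.
    by apply: ss'; split=> // nv'; rewrite nv' eqxx in nv.
  by split=> -[a Ha]; exists a; [rewrite -(IH _ _ (upd_ext a)) | rewrite (IH _ _ (upd_ext a))].
Qed.

Lemma occurs_bound (t : term L) : exists V, forall v, occurs v t -> v < V.
Proof.
elim: t => [v|f a IH]; first by exists v.+1 => u /= ->.
have [V hV] := choice _ IH.
exists (\max_(k < farity f) V k) => v /= [k vk].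
exact: leq_trans (hV k v vk) (leq_bigmax k).
Qed.

Lemma free_in_bound (p : formula L) : exists V, forall v, free_in v p -> v < V.
Proof.
elim: p => [|t u|R a|p IH|p IHp q IHq|n p IH].
- by exists 0.
- have [[V1 h1] [V2 h2]] := (occurs_bound t, occurs_bound u).
  by exists (maxn V1 V2) => v /= [/h1|/h2] lt; rewrite leq_max lt ?orbT.
- have [V hV] := choice _ (fun k => occurs_bound (a k)).
  exists (\max_(k < rarity R) V k) => v /= [k vk].
  exact: leq_trans (hV k v vk) (leq_bigmax k).
- by [].
- have [[V1 h1] [V2 h2]] := (IHp, IHq).
  by exists (maxn V1 V2) => v /= [/h1|/h2] lt; rewrite leq_max lt ?orbT.
- by have [V hV] := IH; exists V => v /= [_ /hV].
Qed.

Fixpoint exs (k : nat) (p : formula L) : formula L :=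
  if k is k'.+1 then fex k' (exs k' p) else p.

Lemma sat_exs (M : structure L) p k : forall s : nat -> M,
  sat M s (exs k p) <-> exists2 t, (forall v, k <= v -> t v = s v) & sat M t p.
Proof.
elim: k => [|k IH] s /=.
  split=> [ps|[t st pt]]; first by exists s.
  by have -> : s = t by apply: functional_extensionality => v; rewrite st.
split=> [[a /IH[t st pt]]|[t st pt]].
  exists t => // v kv; rewrite st ?(ltnW kv) // /upd.
  by case: eqP => // vk; rewrite vk ltnn in kv.
exists (t k); apply/IH; exists t => // v kv; rewrite /upd.
by case: eqP => [->|/eqP nvk] //; apply: st; rewrite ltn_neqAle eq_sym nvk.
Qed.

Lemma free_in_exs (p : formula L) k v : free_in v (exs k p) -> k <= v /\ free_in v p.
Proof.
elim: k => [|k IH] //= [nkv /IH[kv pv]]; split=> //.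
by rewrite ltn_neqAle kv andbT; apply/eqP.
Qed.

Lemma exs_sentence {p : formula L} {k} :
  (forall v, free_in v p -> v < k) -> sentence (exs k p).
Proof. by move=> bound v /free_in_exs[kv /bound]; rewrite ltnNge kv. Qed.

Fixpoint conjn (k : nat) (F : nat -> formula L) : formula L :=
  if k is k'.+1 then fand (conjn k' F) (F k') else fneg fbot.

Lemma sat_conjn (M : structure L) s k F :
  sat M s (conjn k F) <-> forall i, i < k -> sat M s (F i).
Proof.
elim: k => [|k IH] /=; first by split=> // _ i.
rewrite IH; split=> [[Fk Fk'] i|Fk]; last by split=> [i lt|]; apply: Fk => //; apply: ltnW.
by rewrite ltnS leq_eqVlt => /orP[/eqP->|]; last exact: Fk.
Qed.

Definition lit (b : bool) (p : formula L) : formula L := if b then p else fneg p.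

Lemma sat_lit (M : structure L) s b p : sat M s (lit b p) <-> (sat M s p <-> b).
Proof.
case: b => /=; first by split=> [h|[_ h]] //; apply: h.
by split=> [h|[h _] /h //]; split=> // /h.
Qed.

End Syntax.

Lemma complete_theory_sat (L : language) (T : theory L) (M N : structure L) p :
  complete_theory T -> is_model T M -> is_model T N ->
  (exists s : nat -> M, sat M s p) -> exists t : nat -> N, sat N t p.
Proof.
move=> [_ [_ complete]] MT NT [s ps].
have [k bound] := free_in_bound p.
have sat_closure : sat M s (exs k p) by apply/sat_exs; exists s.
case: (complete _ (exs_sentence bound)) => [all_sat|all_neg].
  have /sat_exs[t _ pt] := all_sat N NT (fun _ => dom_inhabitant L N).
  by exists t.
by case: (all_neg M MT s).
Qed.

Section ConvexPieces.
Context {A : Type} (le : A -> A -> Prop).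

Definition between (a b z : A) : Prop := (le a z /\ le z b) \/ (le b z /\ le z a).

Definition convex_union (K : nat) (D : A -> Prop) : Prop :=
  exists C : 'I_K -> A -> Prop,
    (forall k, convex le (C k)) /\ (forall a, D a <-> exists k, C k a).

Definition convex_pieces {K} (D : A -> Prop) (piece : A -> 'I_K) : Prop :=
  forall a b z, D a -> D b -> piece a = piece b -> between a b z -> D z.

Definition piecewise_convex (K : nat) (D : A -> Prop) : Prop :=
  exists piece : A -> 'I_K, convex_pieces D piece.

Lemma convex_between C a b z : convex le C -> C a -> C b -> between a b z -> C z.
Proof. by move=> cvx Ca Cb [[az zb]|[bz za]]; [apply: (cvx a z b) | apply: (cvx b z a)]. Qed.

(* One extra index: [piece] must be total even when [K = 0]. *)
Lemma convex_union_piecewise K D : convex_union K D -> piecewise_convex K.+1 D.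
Proof.
move=> [C [cvx DC]].
pose inC a (k : 'I_K.+1) := exists2 k' : 'I_K, widen_ord (leqnSn K) k' = k & C k' a.
pose piece a := epsilon (inhabits ord_max) (inC a).
have piece_spec a : D a -> inC a (piece a).
  by move=> /DC[k Ck]; apply: epsilon_spec; exists (widen_ord (leqnSn K) k), k.
exists piece => a b z /piece_spec[ka eka Ca] /piece_spec[kb ekb Cb] eab abz.
have ek : ka = kb.
  by apply: val_inj; move: (congr1 val eka) (congr1 val ekb) => /= -> ->; rewrite eab.
by apply/DC; exists ka; apply: convex_between Ca _ abz; rewrite ek.
Qed.

Lemma piecewise_convex_widen K K' D : K <= K' -> piecewise_convex K D -> piecewise_convex K' D.
Proof.
move=> KK' [piece cvx]; exists (widen_ord KK' \o piece) => a b z Da Db /= eab.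
by apply: cvx => //; apply: val_inj; apply: (congr1 val eab).
Qed.

Definition separated (a a' b b' : A) : Prop :=
  ~ between a a' b /\ ~ between a a' b' /\ ~ between b b' a /\ ~ between b b' a'.

(* Both pairings would have to split the four points into the lower two and
   the upper two. *)
Lemma separated_crossing a a' b b' :
  linear_order le -> separated a a' b b' -> ~ separated a b a' b'.
Proof.
case=> refl [_ [trans total]]; rewrite /separated /between.
case: (total a a') => ?; case: (total a b) => ?; case: (total a b') => ?;
case: (total a' b) => ?; case: (total a' b') => ?; case: (total b b') => ?;
  first [solve [intuition] | solve [firstorder eauto]].
Qed.

End ConvexPieces.

Lemma pigeonhole {T T' : finType} (f : T -> T') :
  #|T'| < #|T| -> exists a b, a != b /\ f a = f b.
Proof.
move=> card_lt; have /injectivePn[a [b nab fab]] : ~~ injectiveb f.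
  by apply/injectiveP => /leq_card; rewrite leqNgt card_lt.
by exists a, b.
Qed.

Definition ict_point {A : Type} (P Q : nat -> A -> Prop) (n m i0 j0 : nat) (a : A) : Prop :=
  (forall i, i < n -> P i a <-> i == i0) /\ (forall j, j < m -> Q j a <-> j == j0).

Section IctArray.
Context {A : Type} (le : A -> A -> Prop) {n m KP KQ : nat}.
Context {P Q : nat -> A -> Prop} {x : nat -> nat -> A}.
Context {pieceP : 'I_n -> A -> 'I_KP} {pieceQ : 'I_m -> A -> 'I_KQ}.
Hypothesis ict : forall i0 j0, i0 < n -> j0 < m -> ict_point P Q n m i0 j0 (x i0 j0).
Hypothesis pieceP_convex : forall i : 'I_n, convex_pieces le (P i) (pieceP i).
Hypothesis pieceQ_convex : forall j : 'I_m, convex_pieces le (Q j) (pieceQ j).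

Lemma ict_row (i i' : 'I_n) (j : 'I_m) : P i (x i' j) <-> i = i'.
Proof.
rewrite (proj1 (ict i' j (ltn_ord i') (ltn_ord j)) i (ltn_ord i)).
by split=> [/eqP/val_inj|->].
Qed.

Lemma ict_column (j j' : 'I_m) (i : 'I_n) : Q j (x i j') <-> j = j'.
Proof.
rewrite (proj2 (ict i j' (ltn_ord i) (ltn_ord j')) j (ltn_ord j)).
by split=> [/eqP/val_inj|->].
Qed.

Lemma ict_column_not_between (j j' : 'I_m) (i1 i2 i3 : 'I_n) :
  pieceQ j (x i1 j) = pieceQ j (x i2 j) -> j != j' ->
  ~ between le (x i1 j) (x i2 j) (x i3 j').
Proof.
have Qj (k : 'I_n) : Q j (x k j) by apply/ict_column.
move=> eq njj' /(pieceQ_convex j _ _ _ (Qj i1) (Qj i2) eq) /ict_column ejj'.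
by rewrite ejj' eqxx in njj'.
Qed.

Lemma ict_row_not_between (i i' : 'I_n) (j1 j2 j3 : 'I_m) :
  pieceP i (x i j1) = pieceP i (x i j2) -> i != i' ->
  ~ between le (x i j1) (x i j2) (x i' j3).
Proof.
have Pi (k : 'I_m) : P i (x i k) by apply/ict_row.
move=> eq nii' /(pieceP_convex i _ _ _ (Pi j1) (Pi j2) eq) /ict_row eii'.
by rewrite eii' eqxx in nii'.
Qed.

Lemma ict_column_pair (j : 'I_m) : KQ < n ->
  exists r : 'I_n * 'I_n, r.1 != r.2 /\ pieceQ j (x r.1 j) = pieceQ j (x r.2 j).
Proof.
move=> lt_n; have card_lt : #|'I_KQ| < #|'I_n| by rewrite !card_ord.
have [i [i' [nii' eq]]] := pigeonhole (fun i : 'I_n => pieceQ j (x i j)) card_lt.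
by exists (i, i').
Qed.

Lemma ict_array_false : linear_order le -> KQ < n -> n * n * KP * KP < m -> False.
Proof.
move=> lin lt_n lt_m.
have [rows rowsP] := choice _ (fun j => ict_column_pair j lt_n).
pose signature j :=
  (rows j, (pieceP (rows j).1 (x (rows j).1 j), pieceP (rows j).2 (x (rows j).2 j))).
have card_lt : #|{: ('I_n * 'I_n) * ('I_KP * 'I_KP)}| < #|'I_m|.
  by rewrite !card_prod !card_ord !mulnA.
have [s [t [nst [est ePi ePi']]]] := pigeonhole signature card_lt.
have [nii' eQs] := rowsP s; have [_ eQt] := rowsP t.
rewrite -est in eQt ePi ePi'.
move: (rows s) nii' eQs eQt ePi ePi' => [i i'] /= nii' eQs eQt ePi ePi'.
apply: (separated_crossing le (x i s) (x i' s) (x i t) (x i' t) lin); repeat split;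
  first [ apply: (ict_column_not_between _ _ _ _ _ eQs)
        | apply: (ict_column_not_between _ _ _ _ _ eQt)
        | apply: (ict_row_not_between _ _ _ _ _ ePi)
        | apply: (ict_row_not_between _ _ _ _ _ ePi') ];
  by rewrite // eq_sym.
Qed.

End IctArray.

Lemma no_piecewise_convex_ict_array {A : Type} (le : A -> A -> Prop) n m KP KQ
    (P Q : nat -> A -> Prop) (x : nat -> nat -> A) :
  linear_order le -> KQ < n -> n * n * KP * KP < m ->
  (forall i, i < n -> piecewise_convex le KP (P i)) ->
  (forall j, j < m -> piecewise_convex le KQ (Q j)) ->
  ~ (forall i0 j0, i0 < n -> j0 < m -> ict_point P Q n m i0 j0 (x i0 j0)).
Proof.
move=> lin lt_n lt_m cvxP cvxQ ict.
have [pieceP pieceP_convex] := choice (fun (i : 'I_n) => convex_pieces le (P i))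
  (fun i => cvxP i (ltn_ord i)).
have [pieceQ pieceQ_convex] := choice (fun (j : 'I_m) => convex_pieces le (Q j))
  (fun j => cvxQ j (ltn_ord j)).
exact: (ict_array_false le ict pieceP_convex pieceQ_convex lin lt_n lt_m).
Qed.

Section IctFormulas.
Context {L : language}.

Definition ren0 (x : nat) (p : nat -> nat) (v : nat) : nat := if v == 0 then x else p v.

Lemma sat_ren0 (M : structure L) (s : nat -> M) x p phi :
  injective p -> (forall v, p v != x) ->
  sat M s (renf (ren0 x p) phi) <-> defset M phi (fun v => s (p v)) (s x).
Proof.
move=> p_inj px; rewrite sat_renf /defset.
- suff -> : (fun v => s (ren0 x p v)) = upd (fun v => s (p v)) 0 (s x) by [].
  by apply: functional_extensionality => v; rewrite /ren0 /upd; case: eqP.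
- move=> u v; rewrite /ren0; case: eqP => [->|_]; case: eqP => [->|_] //.
  + by move=> e; move: (px v); rewrite e eqxx.
  + by move=> e; move: (px u); rewrite e eqxx.
  + exact: p_inj.
Qed.

Definition ict_formula (phi : nat -> formula L) (psi : formula L) (n m i0 j0 x : nat)
    (pv qv : nat -> nat -> nat) : formula L :=
  fand (conjn n (fun i => lit (i == i0) (renf (ren0 x (pv i)) (phi i))))
       (conjn m (fun j => lit (j == j0) (renf (ren0 x (qv j)) psi))).

Lemma sat_ict_formula (M : structure L) (s : nat -> M) phi psi n m i0 j0 x pv qv :
  (forall i, injective (pv i)) -> (forall j, injective (qv j)) ->
  (forall i v, pv i v != x) -> (forall j v, qv j v != x) ->
  sat M s (ict_formula phi psi n m i0 j0 x pv qv) <->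
  ict_point (fun i => defset M (phi i) (fun v => s (pv i v)))
            (fun j => defset M psi (fun v => s (qv j v))) n m i0 j0 (s x).
Proof.
move=> pv_inj qv_inj pvx qvx; rewrite /ict_formula /ict_point /= !sat_conjn.
have lit_P i : sat M s (lit (i == i0) (renf (ren0 x (pv i)) (phi i))) <->
    (defset M (phi i) (fun v => s (pv i v)) (s x) <-> i == i0).
  by rewrite sat_lit sat_ren0.
have lit_Q j : sat M s (lit (j == j0) (renf (ren0 x (qv j)) psi)) <->
    (defset M psi (fun v => s (qv j v)) (s x) <-> j == j0).
  by rewrite sat_lit sat_ren0.
by split=> -[hP hQ]; split=> [i lt|j lt];
  [apply/lit_P/hP | apply/lit_Q/hQ | apply/lit_P/hP | apply/lit_Q/hQ].
Qed.

End IctFormulas.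

(* Variables of the array formula: [xvar i j] names the point x(i, j), and
   [pvar i v], [qvar j v] the parameter variable [v] of phi_i and of psi(x; b_j). *)
Definition var_code : Type := ((nat * nat) + ((nat * nat) + (nat * nat)))%type.
Definition xvar (i j : nat) : nat := pickle (inl (i, j) : var_code).
Definition pvar (i v : nat) : nat := pickle (inr (inl (i, v)) : var_code).
Definition qvar (j v : nat) : nat := pickle (inr (inr (j, v)) : var_code).

Lemma pickle_var_code_inj : injective (@pickle var_code).
Proof. exact: pcan_inj pickleK_inv. Qed.

Lemma pvar_inj i : injective (pvar i).
Proof. by move=> u v /pickle_var_code_inj [->]. Qed.

Lemma qvar_inj j : injective (qvar j).
Proof. by move=> u v /pickle_var_code_inj [->]. Qed.

Lemma pvar_xvar i v i0 j0 : pvar i v != xvar i0 j0.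
Proof. by rewrite (inj_eq pickle_var_code_inj). Qed.

Lemma qvar_xvar j v i0 j0 : qvar j v != xvar i0 j0.
Proof. by rewrite (inj_eq pickle_var_code_inj). Qed.

Definition code_assignment {D : Type} (d : D) (x c b : nat -> nat -> D) (w : nat) : D :=
  match pickle_inv w : option var_code with
  | Some (inl (i, j)) => x i j
  | Some (inr (inl (i, v))) => c i v
  | Some (inr (inr (j, v))) => b j v
  | None => d
  end.

Lemma code_assignment_xvar D (d : D) x c b i j : code_assignment d x c b (xvar i j) = x i j.
Proof. by rewrite /code_assignment /xvar pickleK_inv. Qed.

Lemma code_assignment_pvar D (d : D) x c b i v : code_assignment d x c b (pvar i v) = c i v.
Proof. by rewrite /code_assignment /pvar pickleK_inv. Qed.

Lemma code_assignment_qvar D (d : D) x c b j v : code_assignment d x c b (qvar j v) = b j v.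
Proof. by rewrite /code_assignment /qvar pickleK_inv. Qed.

Section IctArrayFormula.
Context {L : language} (phi : nat -> formula L) (psi : formula L) (n m : nat).

Definition ict_cell (i0 j0 : nat) : formula L :=
  ict_formula phi psi n m i0 j0 (xvar i0 j0) pvar qvar.

Definition ict_array : formula L :=
  conjn n (fun i0 => conjn m (fun j0 => ict_cell i0 j0)).

Lemma sat_ict_cell {M : structure L} {s : nat -> M} {c b} :
  (forall i v, s (pvar i v) = c i v) -> (forall j v, s (qvar j v) = b j v) ->
  forall i0 j0, sat M s (ict_cell i0 j0) <->
  ict_point (fun i => defset M (phi i) (c i)) (fun j => defset M psi (b j))
            n m i0 j0 (s (xvar i0 j0)).
Proof.
move=> sc sb i0 j0; rewrite sat_ict_formula.
- have -> : c = fun i v => s (pvar i v) by do 2!apply: functional_extensionality => ?.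
  have -> : b = fun j v => s (qvar j v) by do 2!apply: functional_extensionality => ?.
  exact: iff_refl.
- exact: pvar_inj.
- exact: qvar_inj.
- by move=> i v; apply: pvar_xvar.
- by move=> j v; apply: qvar_xvar.
Qed.

Lemma sat_ict_array {M : structure L} {s : nat -> M} {c b} :
  (forall i v, s (pvar i v) = c i v) -> (forall j v, s (qvar j v) = b j v) ->
  sat M s ict_array <->
  forall i0 j0, i0 < n -> j0 < m ->
    ict_point (fun i => defset M (phi i) (c i)) (fun j => defset M psi (b j))
              n m i0 j0 (s (xvar i0 j0)).
Proof.
move=> sc sb; rewrite /ict_array sat_conjn.
split=> [cells i0 j0 lt_i0 lt_j0 | points i0 lt_i0].
  by move: (cells i0 lt_i0) => /sat_conjn /(_ j0 lt_j0) /(sat_ict_cell sc sb).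
by apply/sat_conjn => j0 lt_j0; apply/(sat_ict_cell sc sb)/points.
Qed.

Lemma realizes_ict_type (M N : structure L) (e : M -> N) c b i0 j0 (a : N) :
  (forall chi d, ict_type M phi c psi b i0 j0 chi d ->
     sat N (upd (fun v => e (d v)) 0 a) chi) ->
  ict_point (fun i => defset N (phi i) (fun v => e (c i v)))
            (fun j => defset N psi (fun v => e (b j v))) n m i0 j0 a.
Proof.
move=> realizes; rewrite /ict_point /defset.
split=> [i _|j _]; case: eqP => [->|ne].
- by split=> // _; apply: realizes; rewrite /ict_type; tauto.
- split=> // Pa; suff : sat N (upd (fun v => e (c i v)) 0 a) (fneg (phi i)) by move/(_ Pa).
  by apply: realizes; right; right; right; left; exists i.
- by split=> // _; apply: realizes; rewrite /ict_type; tauto.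
- split=> // Qa; suff : sat N (upd (fun v => e (b j v)) 0 a) (fneg psi) by move/(_ Qa).
  by apply: realizes; right; right; right; right; exists j.
Qed.

Lemma consistent_ict_type_point {M : structure L} {c b i0 j0} :
  consistent_over M (ict_type M phi c psi b i0 j0) ->
  exists a : M, ict_point (fun i => defset M (phi i) (c i))
                          (fun j => defset M psi (b j)) n m i0 j0 a.
Proof.
move=> [N [e [elem [a realizes]]]].
pose s := code_assignment (dom_inhabitant L M) (fun _ _ => dom_inhabitant L M) c b.
have /elem [a' ha'] : sat N (fun w => e (s w)) (fex (xvar i0 j0) (ict_cell i0 j0)).
  exists a; apply/(sat_ict_cell (c := fun i v => e (c i v)) (b := fun j v => e (b j v))).
  - by move=> i v; rewrite /upd (negbTE (pvar_xvar _ _ _ _)) /s code_assignment_pvar.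
  - by move=> j v; rewrite /upd (negbTE (qvar_xvar _ _ _ _)) /s code_assignment_qvar.
  by rewrite /upd eqxx; apply: realizes_ict_type.
have sc i v : upd s (xvar i0 j0) a' (pvar i v) = c i v.
  by rewrite /upd (negbTE (pvar_xvar _ _ _ _)) /s code_assignment_pvar.
have sb j v : upd s (xvar i0 j0) a' (qvar j v) = b j v.
  by rewrite /upd (negbTE (qvar_xvar _ _ _ _)) /s code_assignment_qvar.
by exists a'; move: ((sat_ict_cell sc sb i0 j0).1 ha'); rewrite /upd eqxx.
Qed.

End IctArrayFormula.

Theorem proposition1p5 (L : language) (T : theory L) :
  complete_theory T -> convexly_orderable T -> dp_small T.
Proof.
move=> complete [M0 [M0T [le [lin convex_defsets]]]] M MT [phi [c [psi [b consistent]]]].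
have [Kpsi psi_convex] := convex_defsets psi.
have [Kphi phi_convex] := choice _ (fun i => convex_defsets (phi i)).
pose n := Kpsi.+2; pose K := (\max_(i < n) Kphi i).+1; pose m := (n * n * K * K).+1.
have [x hx] := choice _ (fun i0 =>
  choice _ (fun j0 => consistent_ict_type_point phi psi n m (consistent i0 j0))).
have [t array_M0] : exists t : nat -> M0, sat M0 t (ict_array phi psi n m).
  apply: complete_theory_sat complete MT M0T _.
  exists (code_assignment (dom_inhabitant L M) x c b).
  apply/(sat_ict_array phi psi n m (code_assignment_pvar _ _ _ _ _)
                                    (code_assignment_qvar _ _ _ _ _)).
  by move=> i0 j0 _ _; rewrite code_assignment_xvar.
move: array_M0; rewrite (sat_ict_array phi psi n m (fun _ _ => erefl) (fun _ _ => erefl)).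
apply: (no_piecewise_convex_ict_array le n m K Kpsi.+1 _ _ _ lin) => //.
- move=> i lt_i; apply: (piecewise_convex_widen le (Kphi i).+1).
    by rewrite ltnS (leq_bigmax (Ordinal lt_i)).
  exact: convex_union_piecewise.
- by move=> j _; apply: convex_union_piecewise.
Qed.
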